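(* Let $(y_t)_{t\in\mathbb{Z}}$ be a strictly stationary sequence of random vectors in $\mathbb{R}^q$ with marginal law $P_0$, and let $P_T:=T^{-1}\sum_{t=1}^T\delta_{y_t}$. Let $k$ be a measurable, symmetric, positive definite, characteristic kernel on $\mathbb{R}^q$ with $\sup_y|k(y,y)|\le 1$, and let $\mathcal{D}$ be the associated Maximum Mean Discrepancy. Let $\{P_\theta;\theta\in\Theta\}$, $\Theta\subset\mathbb{R}^d$, be a family of probability measures on $\mathbb{R}^q$ and $\hat\theta_T\in\arg\min_{\theta\in\Theta}\mathcal{D}(P_\theta,P_T)$. Assume $\Sigma_T=o(T)$ as $T\to\infty$ and the identifiability conditions: (i) the function $\theta\mapsto\mathcal{D}(P_\theta,P_0)$ has a unique minimizer $\theta^*\in\Theta$; and (ii) for every $r>0$, $\inf_{\{\theta\in\Theta:\|\theta-\theta^*\|\ge r\}}\mathcal{D}(P_\theta,P_0)>\mathcal{D}(P_{\theta^*},P_0)$. Then $\hat\theta_T\to\theta^*$ in probability as $T\to\infty$.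
   Context: The kernel $k$ has RKHS $\mathcal{H}$ with $k(u,v)=\langle\Phi(u),\Phi(v)\rangle_{\mathcal{H}}$. For probability measures $P_1,P_2$ on $\mathbb{R}^q$, $\mathcal{D}^2(P_1,P_2)=\mathbb{E}_{X,X'\sim P_1}k(X,X')-2\mathbb{E}_{X\sim P_1,Y'\sim P_2}k(X,Y')+\mathbb{E}_{Y,Y'\sim P_2}k(Y,Y')$ (independent draws). For $t>0$, $\varrho_t:=\left|\mathbb{E}\left\langle k(y_t,\cdot)-\mathbb{E}[k(y_t,\cdot)],\,k(y_0,\cdot)-\mathbb{E}[k(y_0,\cdot)]\right\rangle_{\mathcal{H}}\right|$ and $\Sigma_T:=\sum_{s=1}^T\varrho_s$. *)

From HB Require Import structures.
From mathcomp Require Import all_boot all_order all_algebra.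
From mathcomp Require Import all_classical all_reals all_analysis.
Set Implicit Arguments. Unset Strict Implicit. Unset Printing Implicit Defensive.
Import Order.TTheory GRing.Theory Num.Theory.
Import numFieldNormedType.Exports.
Local Open Scope classical_set_scope.
Local Open Scope ring_scope.

(* R^q is represented by q.-tuple R, with the product (= Borel) sigma-algebra. *)
Notation Rq R q := (q.-tuple R).

Definition RInt d (T : measurableType d) (R : realType)
  (mu : set T -> \bar R) (f : T -> R) : R :=
  fine (\int[mu]_(x in [set: T]) (f x)%:E).

(* squared MMD, E_{X,X'~P1} k - 2 E_{X~P1,Y'~P2} k + E_{Y,Y'~P2} k,
   expectations over independent draws written as iterated integrals *)
Definition MMD2 (R : realType) (q : nat) (k : Rq R q -> Rq R q -> R)
  (P1 P2 : set (Rq R q) -> \bar R) : R :=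
  RInt P1 (fun x => RInt P1 (fun x' => k x x'))
  - 2 * RInt P1 (fun x => RInt P2 (fun y' => k x y'))
  + RInt P2 (fun y => RInt P2 (fun y' => k y y')).

Definition MMD (R : realType) (q : nat) (k : Rq R q -> Rq R q -> R)
  (P1 P2 : set (Rq R q) -> \bar R) : R := Num.sqrt (MMD2 k P1 P2).

Definition kernel_symmetric (R : realType) (q : nat) (k : Rq R q -> Rq R q -> R) :=
  forall x y, k x y = k y x.

Definition kernel_posdef (R : realType) (q : nat) (k : Rq R q -> Rq R q -> R) :=
  forall (n : nat) (x : 'I_n -> Rq R q) (c : 'I_n -> R),
    0 <= \sum_(i < n) \sum_(j < n) c i * c j * k (x i) (x j).

Definition kernel_measurable (R : realType) (q : nat) (k : Rq R q -> Rq R q -> R) :=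
  measurable_fun [set: Rq R q * Rq R q] (fun p => k p.1 p.2).

(* characteristic: the kernel mean embedding P |-> E_P k(X,.) is injective on
   probability measures; since ||mu_P - mu_Q||_H^2 = MMD2 k P Q this reads: *)
Definition kernel_characteristic (R : realType) (q : nat) (k : Rq R q -> Rq R q -> R) :=
  forall P Q : probability (Rq R q) R, MMD2 k P Q = 0 ->
    forall A, measurable A -> P A = Q A.

(* strict stationarity of (y_t)_{t in Z}: all finite-dimensional distributions
   are shift invariant (tested on measurable rectangles) *)
Definition strictly_stationary d (Omega : measurableType d) (R : realType) (q : nat)
  (P : probability Omega R) (y : int -> Omega -> Rq R q) :=
  forall (n : nat) (ts : 'I_n -> int) (h : int) (B : 'I_n -> set (Rq R q)),
    (forall i, measurable (B i)) ->
    P [set w | forall i, B i (y (ts i) w)] =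
    P [set w | forall i, B i (y (ts i + h)%R w)].

Definition empirical d (Omega : measurableType d) (R : realType) (q : nat)
  (y : int -> Omega -> Rq R q) (T : nat) (w : Omega) : set (Rq R q) -> \bar R :=
  fun A => ((T%:R)^-1 * \sum_(t < T) (\1_A (y (t.+1)%:Z w) : R))%:E.

(* rho_t = | E < k(y_t,.) - E k(y_t,.), k(y_0,.) - E k(y_0,.) >_H |, unfolded with
   the reproducing property: <k(u,.), mu0> = int k(u,x) dP0(x) and
   <mu0, mu0> = int int k dP0 dP0, where mu0 = E k(y_0,.) = E k(y_t,.) (P0 is the
   common marginal law) *)
Definition rho d (Omega : measurableType d) (R : realType) (q : nat)
  (P : probability Omega R) (y : int -> Omega -> Rq R q)
  (k : Rq R q -> Rq R q -> R) (t : int) : R :=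
  let P0 := pushforward P (y 0) in
  let m0 := fun u => RInt P0 (fun x => k u x) in
  let M := RInt P0 (fun x => RInt P0 (fun x' => k x x')) in
  `| RInt P (fun w => k (y t w) (y 0 w) - m0 (y t w) - m0 (y 0 w) + M) |.

Definition Sigma d (Omega : measurableType d) (R : realType) (q : nat)
  (P : probability Omega R) (y : int -> Omega -> Rq R q)
  (k : Rq R q -> Rq R q -> R) (T : nat) : R :=
  \sum_(s < T) rho P y k (s.+1)%:Z.

From HB Require Import structures.
From mathcomp Require Import all_boot all_order all_algebra.
From mathcomp Require Import all_classical all_reals all_analysis.
From mathcomp Require Import measurable_realfun lra ring.
Import Order.TTheory GRing.Theory Num.Theory.
Import numFieldNormedType.Exports.
Local Open Scope classical_set_scope.
Local Open Scope ring_scope.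
Set Implicit Arguments. Unset Strict Implicit. Unset Printing Implicit Defensive.

(* The squared MMD is the squared RKHS distance between kernel mean embeddings,
   so it extends to a quadratic form on finite signed combinations of probability
   measures.  That form is positive semidefinite: splitting a measure mu into N
   copies of weight 1/N and replacing each copy by a Dirac mass at an independent
   mu-distributed point changes the form by O(1/N) only, and on Dirac masses it is
   the kernel Gram form.  Hence MMD obeys the triangle inequality, and as theta_hat
   minimises D(P_theta, P_T),
     D(P_theta_hat, P_0) <= D(P_theta_star, P_0) + 2 D(P_T, P_0).
   E D(P_T, P_0)^2 is the average over s, t <= T of the RKHS autocovariances
   E <k(y_s, .) - m, k(y_t, .) - m>, which stationarity bounds by rho_|s-t| (and
   by 2 on the diagonal), so it is at most 2/T + 2 Sigma_T/T -> 0.  Finally,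
   well-separation turns |theta_hat - theta_star| >= eps into
   D(P_T, P_0)^2 >= (g/2)^2 for a fixed gap g > 0, an event whose probability
   vanishes by Markov's inequality. *)

Lemma ge0_of_forall_add_divn (R : archiRealFieldType) (x b : R) :
  (forall N : nat, 0 <= x + b / N.+1%:R) -> 0 <= x.
Proof.
move=> h; rewrite leNgt; apply/negP => x_lt0.
have bx_ge0 : 0 <= `|b| / - x by rewrite divr_ge0 // oppr_ge0 ltW.
have := h (Num.bound (`|b| / - x)); set N := (Num.bound _).+1.
have N_gt0 : 0 < N%:R :> R by rewrite ltr0n.
have : `|b| / - x < N%:R by apply: lt_le_trans (archi_boundP bx_ge0) _; rewrite ler_nat.
rewrite ltr_pdivrMr ?oppr_gt0 // => bN.
have bNE : N%:R * (b / N%:R) = b by rewrite mulrC divfK ?gt_eqF.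
have := ler_norm b; nra.
Qed.

Lemma cvg_div_nat0 (R : realType) (c : R) : c / n%:R @[n --> \oo] --> 0.
Proof.
have : c * harmonic n @[n --> \oo] --> c * 0 by apply: cvgMl_tmp; exact: cvg_harmonic.
by rewrite mulr0 => h; rewrite -cvg_shiftS; exact: h.
Qed.

Lemma discriminant_le (R : realFieldType) (a b c : R) : 0 <= c ->
  (forall t, 0 <= a + 2 * t * b + t ^+ 2 * c) -> b ^+ 2 <= a * c.
Proof.
move=> c_ge0 h; have [c0|c_neq0] := eqVneq c 0.
  rewrite c0 mulr0; have [->|b_neq0] := eqVneq b 0; first by rewrite expr0n.
  have := h (- (a + 1) / (2 * b)); rewrite c0 mulr0 addr0.
  have -> : 2 * (- (a + 1) / (2 * b)) * b = - (a + 1) by field.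
  lra.
have c_gt0 : 0 < c by rewrite lt_def c_neq0.
have := h (- b / c).
have -> : a + 2 * (- b / c) * b + (- b / c) ^+ 2 * c = a - b ^+ 2 / c by field.
by rewrite subr_ge0 ler_pdivrMr.
Qed.

Section bounded_measurable_integral.
Context d (T : measurableType d) (R : realType).
Implicit Types f g : T -> R.

Definition bounded_mfun f := measurable_fun setT f /\ exists M : R, forall x, `|f x| <= M.

Lemma bounded_mfun_measurable f : bounded_mfun f -> measurable_fun setT f.
Proof. by case. Qed.

Lemma bounded_mfun_cst c : bounded_mfun (fun=> c).
Proof. by split; [exact: measurable_cst | exists `|c|]. Qed.

Lemma bounded_mfunD f g :
  bounded_mfun f -> bounded_mfun g -> bounded_mfun (fun x => f x + g x).
Proof.
case=> mf [M fM] [mg [N gN]]; split; first exact: measurable_funD.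
by exists (M + N) => x; apply: le_trans (ler_normD _ _) _; apply: lerD.
Qed.

Lemma bounded_mfunZl c f : bounded_mfun f -> bounded_mfun (fun x => c * f x).
Proof.
case=> mf [M fM]; split; first exact: measurable_funM.
by exists (`|c| * M) => x; rewrite normrM ler_wpM2l.
Qed.

Lemma bounded_mfunB f g :
  bounded_mfun f -> bounded_mfun g -> bounded_mfun (fun x => f x - g x).
Proof.
move=> bf bg; apply: bounded_mfunD => //.
by under eq_fun do rewrite -mulN1r; exact: bounded_mfunZl.
Qed.

Lemma bounded_mfun_sum I (s : seq I) (F : I -> T -> R) :
  (forall i, bounded_mfun (F i)) -> bounded_mfun (fun x => \sum_(i <- s) F i x).
Proof.
move=> bF; elim: s => [|i s ih].
  by under eq_fun do rewrite big_nil; exact: bounded_mfun_cst.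
by under eq_fun do rewrite big_cons; exact: bounded_mfunD.
Qed.

Variable mu : probability T R.

Lemma bounded_mfun_integrable f : bounded_mfun f -> mu.-integrable setT (EFin \o f).
Proof.
case=> mf [M fM]; apply: (@le_integrable _ _ _ mu _ _ _ (EFin \o cst M)) => //.
- exact/measurable_EFinP.
- by move=> x _ /=; rewrite lee_fin (le_trans (fM x)) ?ler_norm.
- exact: finite_measure_integrable_cst.
Qed.

Lemma RInt_cst c : RInt mu (fun=> c) = c.
Proof. by rewrite [LHS]Rintegral_cst //= probability_setT mulr1. Qed.

Lemma RIntD f g : bounded_mfun f -> bounded_mfun g ->
  RInt mu (fun x => f x + g x) = RInt mu f + RInt mu g.
Proof. by move=> bf bg; apply: RintegralD => //; exact: bounded_mfun_integrable. Qed.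

Lemma RIntB f g : bounded_mfun f -> bounded_mfun g ->
  RInt mu (fun x => f x - g x) = RInt mu f - RInt mu g.
Proof. by move=> bf bg; apply: RintegralB => //; exact: bounded_mfun_integrable. Qed.

Lemma RIntZl c f : bounded_mfun f -> RInt mu (fun x => c * f x) = c * RInt mu f.
Proof. by move=> bf; apply: RintegralZl => //; exact: bounded_mfun_integrable. Qed.

Lemma RInt_sum I (s : seq I) (F : I -> T -> R) : (forall i, bounded_mfun (F i)) ->
  RInt mu (fun x => \sum_(i <- s) F i x) = \sum_(i <- s) RInt mu (F i).
Proof.
move=> bF; elim: s => [|i s ih].
  by under eq_fun do rewrite big_nil; rewrite big_nil RInt_cst.
by under eq_fun do rewrite big_cons; rewrite big_cons RIntD ?ih //; exact: bounded_mfun_sum.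
Qed.

Lemma le_RInt f g : bounded_mfun f -> bounded_mfun g -> (forall x, f x <= g x) ->
  RInt mu f <= RInt mu g.
Proof. by move=> bf bg fg; apply: le_Rintegral => //; exact: bounded_mfun_integrable. Qed.

Lemma RInt_ge0 f : (forall x, 0 <= f x) -> 0 <= RInt mu f.
Proof. by move=> f0; exact: Rintegral_ge0. Qed.

Lemma normr_RInt_le f M : bounded_mfun f -> (forall x, `|f x| <= M) -> `|RInt mu f| <= M.
Proof.
move=> bf fM; have fMP x : - M <= f x <= M by rewrite -ler_norml.
rewrite ler_norml; apply/andP; split.
- rewrite -[X in X <= _](RInt_cst (- M)); apply: le_RInt => //; first exact: bounded_mfun_cst.
  by move=> x; case/andP: (fMP x).
- rewrite -[X in _ <= X](RInt_cst M); apply: le_RInt => //; first exact: bounded_mfun_cst.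
  by move=> x; case/andP: (fMP x).
Qed.

End bounded_measurable_integral.
Arguments bounded_mfun_cst {d T R}.

Create HintDb bounded_mfun.
#[export] Hint Resolve bounded_mfun_cst bounded_mfunD bounded_mfunB bounded_mfunZl
  bounded_mfun_sum : bounded_mfun.

Definition bounded_psd_kernel dX (X : measurableType dX) (R : realType)
    (k : X -> X -> R) :=
  [/\ measurable_fun setT (fun p : X * X => k p.1 p.2),
      forall x y, k x y = k y x,
      forall n (x : 'I_n -> X) (c : 'I_n -> R),
        0 <= \sum_(i < n) \sum_(j < n) c i * c j * k (x i) (x j) &
      forall x, `|k x x| <= 1].

Section kernel_mean_embedding.
Context dX (X : measurableType dX) (R : realType) (k : X -> X -> R).
Hypothesis kP : bounded_psd_kernel k.

Let kmeas : measurable_fun setT (fun p : X * X => k p.1 p.2). Proof. by case: kP. Qed.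
Let ksym x y : k x y = k y x. Proof. by case: kP. Qed.
Let kpd n (x : 'I_n -> X) (c : 'I_n -> R) :
  0 <= \sum_(i < n) \sum_(j < n) c i * c j * k (x i) (x j).
Proof. by case: kP. Qed.
Let kdiag x : `|k x x| <= 1. Proof. by case: kP. Qed.

Lemma normr_kernel_le1 x y : `|k x y| <= 1.
Proof.
have kpd2 c := @kpd 2 (fun i => if val i == 0%N then x else y)
  (fun i => if val i == 0%N then 1 else c).
have := kpd2 1; have := kpd2 (-1); rewrite !big_ord_recl !big_ord0 /= (ksym y x).
have := kdiag x; have := kdiag y; rewrite !ler_norml => /andP[_ ?] /andP[_ ?] ? ?.
by apply/andP; split; nra.
Qed.

Lemma measurable_kernel x : measurable_fun setT (k x).
Proof. exact: measurableT_comp kmeas (pair1_measurable x). Qed.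

Lemma bounded_mfun_kernel x : bounded_mfun (k x).
Proof. by split; [exact: measurable_kernel | exists 1; exact: normr_kernel_le1]. Qed.

Lemma bounded_mfun_kernel_uncurry : bounded_mfun (fun p : X * X => k p.1 p.2).
Proof. by split; [exact: kmeas | exists 1 => p; exact: normr_kernel_le1]. Qed.

Lemma bounded_mfun_kernel_diag : bounded_mfun (fun x => k x x).
Proof.
split; last by exists 1.
change (measurable_fun setT ((fun p : X * X => k p.1 p.2) \o (fun x => (x, x)))).
by apply: measurableT_comp kmeas _; exact: measurable_fun_pair.
Qed.

#[local] Hint Resolve bounded_mfun_kernel bounded_mfun_kernel_diag : bounded_mfun.

Definition mean_embedding (mu : probability X R) x := RInt mu (k x).

Definition mean_dot (mu nu : probability X R) := RInt mu (mean_embedding nu).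

(* Shifting [k] by 1 makes it nonnegative, so that Tonelli's theorem applies. *)
Let k1 (p : X * X) : \bar R := (k p.1 p.2 + 1)%:E.

Let measurable_k1 : measurable_fun setT k1.
Proof. by apply/measurable_EFinP; apply: measurable_funD => //; exact: measurable_cst. Qed.

Let k1_ge0 p : (0 <= k1 p)%E.
Proof.
rewrite lee_fin -lerBlDr sub0r.
by have /andP[] : - 1 <= k p.1 p.2 <= 1 by rewrite -ler_norml normr_kernel_le1.
Qed.

Let integral_k1 (mu : probability X R) x :
  (\int[mu]_y k1 (x, y))%E = (mean_embedding mu x + 1)%:E.
Proof.
rewrite -[in RHS](RInt_cst mu 1) -RIntD; try by auto with bounded_mfun.
rewrite /RInt fineK //; apply: integrable_fin_num => //.
by apply: bounded_mfun_integrable; auto with bounded_mfun.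
Qed.

Lemma bounded_mfun_mean_embedding mu : bounded_mfun (mean_embedding mu).
Proof.
split; last first.
  exists 1 => x; apply: normr_RInt_le => //; first exact: bounded_mfun_kernel.
  exact: normr_kernel_le1.
have mF := measurable_fun_fubini_tonelli_F
  (m2 := (mu : {sigma_finite_measure set X -> \bar R})) k1 measurable_k1 k1_ge0.
have -> : mean_embedding mu =
    (fun x => fine (fubini_F (mu : {sigma_finite_measure set X -> \bar R}) k1 x) - 1).
  by apply/funext => x; rewrite /fubini_F integral_k1 /= addrK.
by apply: measurable_funB; [exact: measurableT_comp mF|exact: measurable_cst].
Qed.

#[local] Hint Resolve bounded_mfun_mean_embedding : bounded_mfun.

Lemma mean_dotC mu nu : mean_dot mu nu = mean_dot nu mu.
Proof.
have := fubini_tonelli (m1 := (mu : {sigma_finite_measure set X -> \bar R}))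
  (m2 := (nu : {sigma_finite_measure set X -> \bar R})) k1 measurable_k1 k1_ge0.
have k1C y : (fun x => k1 (x, y)) = (fun x => k1 (y, x)).
  by apply/funext => x; rewrite /k1 /= ksym.
under eq_integral do rewrite integral_k1.
under [X in _ = X]eq_integral do rewrite k1C integral_k1.
move=> /(congr1 fine); rewrite -!/(RInt _ _) !RIntD ?RInt_cst; try by auto with bounded_mfun.
by move/addIr.
Qed.

Definition pdirac (a : X) : probability X R := \d_a.

Lemma mean_embedding_dirac a x : mean_embedding (pdirac a) x = k x a.
Proof.
rewrite /mean_embedding /RInt integral_dirac ?diracT ?mul1e //.
exact/measurable_EFinP/measurable_kernel.
Qed.

Lemma mean_dot_diracl a mu : mean_dot (pdirac a) mu = mean_embedding mu a.
Proof.
rewrite /mean_dot /RInt integral_dirac ?diracT ?mul1e //.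
by apply/measurable_EFinP; case: (bounded_mfun_mean_embedding mu).
Qed.

Lemma mean_dot_diracr mu a : mean_dot mu (pdirac a) = mean_embedding mu a.
Proof. by rewrite mean_dotC mean_dot_diracl. Qed.

Lemma mean_dot_dirac a b : mean_dot (pdirac a) (pdirac b) = k a b.
Proof. by rewrite mean_dot_diracl mean_embedding_dirac ksym. Qed.

(* A combination [:: (a_1, mu_1); ...; (a_n, mu_n)] stands for the element
   sum_i a_i m_(mu_i) of the RKHS, m_mu being the mean embedding of mu. *)
Local Notation comb := (seq (R * probability X R)).

Definition comb_dot (L M : comb) :=
  \sum_(p <- L) \sum_(p' <- M) p.1 * p'.1 * mean_dot p.2 p'.2.

Definition comb_sqnorm (L : comb) := comb_dot L L.

Definition comb_norm (L : comb) := Num.sqrt (comb_sqnorm L).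

Definition comb_scale (t : R) (L : comb) : comb := [seq (t * p.1, p.2) | p <- L].

Definition comb_sub (L M : comb) := L ++ comb_scale (-1) M.

Definition diracs (s : seq (R * X)) : comb :=
  [seq (p.1, pdirac p.2) | p <- s].

Lemma comb_dotC L M : comb_dot L M = comb_dot M L.
Proof.
rewrite /comb_dot exchange_big /=; apply: eq_bigr => p _; apply: eq_bigr => p' _.
by rewrite mean_dotC (mulrC p'.1).
Qed.

Lemma comb_dot_catl L1 L2 M : comb_dot (L1 ++ L2) M = comb_dot L1 M + comb_dot L2 M.
Proof. by rewrite /comb_dot big_cat. Qed.

Lemma comb_dot_catr L M1 M2 : comb_dot L (M1 ++ M2) = comb_dot L M1 + comb_dot L M2.
Proof. by rewrite comb_dotC comb_dot_catl !(comb_dotC _ L). Qed.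

Lemma comb_dot_scalel t L M : comb_dot (comb_scale t L) M = t * comb_dot L M.
Proof.
rewrite /comb_dot big_map mulr_sumr; apply: eq_bigr => p _.
by rewrite mulr_sumr; apply: eq_bigr => p' _ /=; rewrite !mulrA.
Qed.

Lemma comb_dot_scaler t L M : comb_dot L (comb_scale t M) = t * comb_dot L M.
Proof. by rewrite comb_dotC comb_dot_scalel comb_dotC. Qed.

Definition comb_dotE :=
  (comb_dot_catl, comb_dot_catr, comb_dot_scalel, comb_dot_scaler).

Lemma comb_dot1l c mu M :
  comb_dot [:: (c, mu)] M = c * \sum_(p <- M) p.1 * mean_dot mu p.2.
Proof. by rewrite /comb_dot big_seq1 mulr_sumr; apply: eq_bigr => p _; rewrite mulrA. Qed.

Lemma comb_dot11 a mu b nu : comb_dot [:: (a, mu)] [:: (b, nu)] = a * b * mean_dot mu nu.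
Proof. by rewrite comb_dot1l big_seq1 /= mulrA [a * b]mulrC -mulrA. Qed.

Lemma comb_dot_nseql N p M : comb_dot (nseq N p) M = N%:R * comb_dot [:: p] M.
Proof. by rewrite /comb_dot big_nseq big_seq1 iter_addr_0 mulr_natl. Qed.

Lemma comb_sqnorm_diracs_ge0 s : 0 <= comb_sqnorm (diracs s).
Proof.
rewrite /comb_sqnorm /comb_dot big_map (big_nth (0, point)) big_mkord.
under eq_bigr do rewrite big_map (big_nth (0, point)) big_mkord.
under eq_bigr do under eq_bigr do rewrite mean_dot_dirac.
exact: kpd.
Qed.

Definition embedding_variance (mu : probability X R) :=
  RInt mu (fun a => k a a) - mean_dot mu mu.

Lemma comb_sqnorm_dirac_cat c a L : comb_sqnorm (diracs [:: (c, a)] ++ L) =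
  c ^+ 2 * k a a + 2 * c * \sum_(p <- L) p.1 * mean_embedding p.2 a + comb_sqnorm L.
Proof.
rewrite /comb_sqnorm !comb_dotE /= comb_dot11 mean_dot_dirac (comb_dotC L [:: _]) comb_dot1l.
rewrite (eq_bigr (fun p => p.1 * mean_embedding p.2 a)); last first.
  by move=> p _; rewrite mean_dot_diracl.
by rewrite expr2; ring.
Qed.

Lemma bounded_mfun_comb_sqnorm_dirac c L :
  bounded_mfun (fun a => comb_sqnorm (diracs [:: (c, a)] ++ L)).
Proof.
by under eq_fun do rewrite comb_sqnorm_dirac_cat; auto 6 with bounded_mfun.
Qed.

Lemma RInt_comb_sqnorm_dirac (mu : probability X R) c L :
  RInt mu (fun a => comb_sqnorm (diracs [:: (c, a)] ++ L)) =
  comb_sqnorm ((c, mu) :: L) + c ^+ 2 * embedding_variance mu.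
Proof.
under eq_fun do rewrite comb_sqnorm_dirac_cat.
rewrite !RIntD ?RInt_cst ?RIntZl ?RInt_sum; try by auto 6 with bounded_mfun.
rewrite (eq_bigr (fun p => p.1 * mean_dot mu p.2)); last first.
  by move=> p _; rewrite RIntZl //; exact: bounded_mfun_mean_embedding.
rewrite /comb_sqnorm -cat1s !comb_dotE comb_dot11 (comb_dotC L [:: _]) comb_dot1l.
by rewrite /embedding_variance expr2; ring.
Qed.

Lemma comb_dot_nseqr N p M : comb_dot M (nseq N p) = N%:R * comb_dot M [:: p].
Proof. by rewrite comb_dotC comb_dot_nseql comb_dotC. Qed.

Lemma comb_sqnorm_catCA A B C : comb_sqnorm (A ++ B ++ C) = comb_sqnorm (B ++ A ++ C).
Proof.
by rewrite /comb_sqnorm !comb_dotE (comb_dotC B A) (comb_dotC C A) (comb_dotC C B); ring.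
Qed.

Lemma comb_sqnorm_nseq N c mu A B : (0 < N)%N ->
  comb_sqnorm (A ++ nseq N (N%:R^-1 * c, mu) ++ B) = comb_sqnorm (A ++ (c, mu) :: B).
Proof.
move=> N0; have N0' : N%:R != 0 :> R by rewrite pnatr_eq0 -lt0n.
rewrite /comb_sqnorm -cat1s !(comb_dotE, comb_dot_nseql, comb_dot_nseqr).
have -> : [:: (N%:R^-1 * c, mu)] = comb_scale N%:R^-1 [:: (c, mu)] by [].
by rewrite !(comb_dot_scalel, comb_dot_scaler); field.
Qed.

Lemma comb_sqnorm_ge0 L : 0 <= comb_sqnorm L.
Proof.
suff /(_ [::]) : forall s, 0 <= comb_sqnorm (diracs s ++ L) by [].
elim: L => [|[c mu] L IHL] s; first by rewrite cats0; exact: comb_sqnorm_diracs_ge0.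
(* Split (c, mu) into N.+1 copies of weight cN and replace them one at a time by
   Dirac masses at mu-distributed points; each replacement costs cN ^+ 2 * V. *)
set V := embedding_variance mu.
apply: (@ge0_of_forall_add_divn _ _ (c ^+ 2 * V)) => N; set cN := N.+1%:R^-1 * c.
have sample j s' :
    0 <= comb_sqnorm (diracs s' ++ nseq j (cN, mu) ++ L) + j%:R * (cN ^+ 2 * V).
  elim: j s' => [|j IHj] s'; first by rewrite mul0r addr0; exact: IHL.
  have -> : comb_sqnorm (diracs s' ++ nseq j.+1 (cN, mu) ++ L) =
      comb_sqnorm ([:: (cN, mu)] ++ diracs s' ++ nseq j (cN, mu) ++ L).
    by rewrite [RHS]comb_sqnorm_catCA.
  have lb a : - (j%:R * (cN ^+ 2 * V)) <=
      comb_sqnorm (diracs [:: (cN, a)] ++ diracs s' ++ nseq j (cN, mu) ++ L).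
    by rewrite -subr_ge0 opprK; exact: (IHj ((cN, a) :: s')).
  have := le_RInt mu (bounded_mfun_cst _) (bounded_mfun_comb_sqnorm_dirac cN _) lb.
  rewrite RInt_cst RInt_comb_sqnorm_dirac -natr1 mulrDl mul1r.
  by rewrite -/V cat1s; lra.
have := sample N.+1 s; rewrite comb_sqnorm_nseq //.
by congr (0 <= _ + _); rewrite /cN; field.
Qed.

Lemma comb_dot_sqr_le L M : comb_dot L M ^+ 2 <= comb_sqnorm L * comb_sqnorm M.
Proof.
apply: discriminant_le (comb_sqnorm_ge0 M) _ => t.
have := comb_sqnorm_ge0 (L ++ comb_scale t M).
by rewrite /comb_sqnorm !comb_dotE (comb_dotC M L); congr (0 <= _); ring.
Qed.

Lemma comb_norm_cat L M : comb_norm (L ++ M) <= comb_norm L + comb_norm M.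
Proof.
have LM_le : comb_dot L M <= comb_norm L * comb_norm M.
  apply: le_trans (ler_norm _) _; rewrite -sqrtr_sqr -sqrtrM ?comb_sqnorm_ge0 //.
  exact/ler_wsqrtr/comb_dot_sqr_le.
rewrite -[X in _ <= X]ger0_norm ?addr_ge0 ?sqrtr_ge0 // -sqrtr_sqr.
apply: ler_wsqrtr; rewrite sqrrD !sqr_sqrtr ?comb_sqnorm_ge0 //.
by rewrite /comb_sqnorm !comb_dotE (comb_dotC M L) -/(comb_sqnorm L) -/(comb_sqnorm M); lra.
Qed.

Lemma comb_norm_sub_le L M N :
  comb_norm (comb_sub L N) <= comb_norm (comb_sub L M) + comb_norm (comb_sub M N).
Proof.
apply: le_trans (comb_norm_cat _ _); rewrite le_eqVlt; apply/orP; left; apply/eqP.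
by congr Num.sqrt; rewrite /comb_sqnorm /comb_sub !comb_dotE; ring.
Qed.

Lemma comb_norm_subC L M : comb_norm (comb_sub L M) = comb_norm (comb_sub M L).
Proof. by congr Num.sqrt; rewrite /comb_sqnorm /comb_sub !comb_dotE; ring. Qed.

End kernel_mean_embedding.
Arguments pdirac {dX X R}.

#[export] Hint Resolve bounded_mfun_kernel bounded_mfun_kernel_diag
  bounded_mfun_mean_embedding : bounded_mfun.

Section empirical_measure.
Context (R : realType) (q : nat) (dO : measure_display) (Omega : measurableType dO).
Variable y : int -> Omega -> Rq R q.

Lemma RInt_empirical T w (f : Rq R q -> R) : measurable_fun setT f ->
  RInt (empirical y T w) f = T%:R^-1 * \sum_(t < T) f (y t.+1%:Z w).
Proof.
move=> mf; set a := fun t : nat => y t.+1%:Z w.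
have T_ge0 : 0 <= T%:R^-1 :> R by rewrite invr_ge0.
pose m := mscale (NngNum T_ge0) (msum (fun t => \d_(a t)) T).
have -> : empirical y T w = m.
  apply/funext => A; rewrite /empirical /m /mscale /msum /= EFinM -sumEFin.
  by congr (_ * _)%E; apply: eq_bigr => t _.
have integral_m (g : Rq R q -> R) : measurable_fun setT g -> (forall x, 0 <= g x) ->
    (\int[m]_x (g x)%:E = (T%:R^-1 * \sum_(t < T) g (a t))%:E)%E.
  move=> mg g_ge0; have mEg : measurable_fun setT (EFin \o g) by exact/measurable_EFinP.
  rewrite ge0_integral_mscale ?ge0_integral_measure_sum //; try by move=> x _; rewrite lee_fin.
  rewrite EFinM -sumEFin; congr (_ * _)%E; apply: eq_bigr => t _.
  by rewrite integral_dirac // diracT mul1e.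
rewrite /RInt integralE funerpos funerneg.
rewrite integral_m ?integral_m; try solve [exact: measurable_funrpos|exact: measurable_funrneg|
  exact: funrpos_ge0|exact: funrneg_ge0].
rewrite -EFinB /= -mulrBr -sumrB; congr (_ * _); apply: eq_bigr => t _.
by have := congr1 (fun g => g (a t)) (funrposBneg f).
Qed.

End empirical_measure.

Section MMD_empirical.
Context (R : realType) (q : nat) (k : Rq R q -> Rq R q -> R).
Hypothesis kP : bounded_psd_kernel k.
Context (dO : measure_display) (Omega : measurableType dO) (y : int -> Omega -> Rq R q).
Local Notation X := (Rq R q).

Definition empirical_comb T w : seq (R * probability X R) :=
  diracs [seq (T%:R^-1, y t.+1%:Z w) | t <- index_iota 0 T].

Definition empirical_sqMMD (P0 : probability X R) T w :=
  comb_sqnorm k (comb_sub (empirical_comb T w) [:: (1, P0)]).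

Lemma comb_dot1_empirical (mu : probability X R) T w :
  comb_dot k [:: (1, mu)] (empirical_comb T w) =
  T%:R^-1 * \sum_(t < T) mean_embedding k mu (y t.+1%:Z w).
Proof.
rewrite comb_dot1l mul1r /empirical_comb /diracs !big_map big_mkord mulr_sumr.
by apply: eq_bigr => t _; rewrite mean_dot_diracr.
Qed.

Lemma comb_sqnorm_empirical T w : comb_sqnorm k (empirical_comb T w) =
  T%:R^-1 * \sum_(s < T) (T%:R^-1 * \sum_(t < T) k (y s.+1%:Z w) (y t.+1%:Z w)).
Proof.
rewrite /comb_sqnorm /comb_dot /empirical_comb /diracs !big_map big_mkord mulr_sumr.
apply: eq_bigr => s _; rewrite !big_map big_mkord !mulr_sumr.
by apply: eq_bigr => t _ /=; rewrite mean_dot_dirac // mulrA.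
Qed.

Lemma MMD2_comb (mu nu : probability X R) :
  MMD2 k mu nu = comb_sqnorm k (comb_sub [:: (1, mu)] [:: (1, nu)]).
Proof.
rewrite /comb_sqnorm /comb_sub !(comb_dotE kP) /= !comb_dot11 (mean_dotC kP nu mu).
have -> : MMD2 k mu nu = mean_dot k mu mu - 2 * mean_dot k mu nu + mean_dot k nu nu by [].
ring.
Qed.

Lemma MMD2_empirical (mu : probability X R) T w :
  MMD2 k mu (empirical y T w) = comb_sqnorm k (comb_sub [:: (1, mu)] (empirical_comb T w)).
Proof.
have RInt_emp_k x : RInt (empirical y T w) (k x) =
    T%:R^-1 * \sum_(t < T) mean_embedding k (pdirac (y t.+1%:Z w)) x.
  rewrite RInt_empirical; last exact: measurable_kernel.
  by congr (_ * _); apply: eq_bigr => t _; rewrite mean_embedding_dirac.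
have RInt_mu_emp : RInt mu (fun x => RInt (empirical y T w) (k x)) =
    T%:R^-1 * \sum_(t < T) mean_embedding k mu (y t.+1%:Z w).
  under eq_fun do rewrite RInt_emp_k.
  rewrite RIntZl ?RInt_sum; try by auto with bounded_mfun.
  by congr (_ * _); apply: eq_bigr => t _; exact: mean_dot_diracr.
have RInt_emp_emp : RInt (empirical y T w) (fun z => RInt (empirical y T w) (k z)) =
    T%:R^-1 * \sum_(s < T) (T%:R^-1 * \sum_(t < T) k (y s.+1%:Z w) (y t.+1%:Z w)).
  under eq_fun do rewrite RInt_emp_k.
  rewrite RInt_empirical; last by apply: bounded_mfun_measurable; auto with bounded_mfun.
  by congr (_ * _); apply: eq_bigr => s _; congr (_ * _); apply: eq_bigr => t _;
    rewrite mean_embedding_dirac.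
rewrite /MMD2 RInt_mu_emp RInt_emp_emp -[RInt mu (fun x => RInt mu (k x))]/(mean_dot k mu mu).
rewrite /comb_sqnorm /comb_sub !(comb_dotE kP) (comb_dotC kP (empirical_comb T w)) comb_dot11.
rewrite comb_dot1_empirical -/(comb_sqnorm _ _) comb_sqnorm_empirical.
ring.
Qed.

Lemma empirical_sqMMD_ge0 P0 T w : 0 <= empirical_sqMMD P0 T w.
Proof. exact: comb_sqnorm_ge0. Qed.

Lemma empirical_sqMMDE P0 T w : empirical_sqMMD P0 T w =
  T%:R^-1 * \sum_(s < T) (T%:R^-1 * \sum_(t < T) k (y s.+1%:Z w) (y t.+1%:Z w))
  - 2 * (T%:R^-1 * \sum_(t < T) mean_embedding k P0 (y t.+1%:Z w)) + mean_dot k P0 P0.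
Proof.
rewrite /empirical_sqMMD /comb_sqnorm /comb_sub !(comb_dotE kP).
rewrite (comb_dotC kP (empirical_comb T w)) comb_dot11 comb_dot1_empirical.
by rewrite -/(comb_sqnorm _ _) comb_sqnorm_empirical; ring.
Qed.

Lemma MMD_le_empirical (mu P0 : probability X R) T w :
  MMD k mu P0 <= MMD k mu (empirical y T w) + Num.sqrt (empirical_sqMMD P0 T w).
Proof. by rewrite /MMD MMD2_comb MMD2_empirical; exact: comb_norm_sub_le. Qed.

Lemma MMD_empirical_le (mu P0 : probability X R) T w :
  MMD k mu (empirical y T w) <= MMD k mu P0 + Num.sqrt (empirical_sqMMD P0 T w).
Proof.
rewrite /MMD MMD2_comb MMD2_empirical -[Num.sqrt (empirical_sqMMD _ _ _)]/(comb_norm k _).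
by rewrite comb_norm_subC //; exact: comb_norm_sub_le.
Qed.

Lemma MMD_excess_le (mu_hat mu_star P0 : probability X R) T w :
  MMD k mu_hat (empirical y T w) <= MMD k mu_star (empirical y T w) ->
  MMD k mu_hat P0 <= MMD k mu_star P0 + 2 * Num.sqrt (empirical_sqMMD P0 T w).
Proof.
have := MMD_le_empirical mu_hat P0 T w; have := MMD_empirical_le mu_star P0 T w; lra.
Qed.

Lemma empirical_sqMMD_ge_gap (mu_hat mu_star P0 : probability X R) T w g : 0 <= g ->
  MMD k mu_hat (empirical y T w) <= MMD k mu_star (empirical y T w) ->
  MMD k mu_star P0 + g <= MMD k mu_hat P0 -> (g / 2) ^+ 2 <= empirical_sqMMD P0 T w.
Proof.
move=> g_ge0 /(MMD_excess_le P0) excess gap.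
rewrite -(sqr_sqrtr (empirical_sqMMD_ge0 P0 T w)).
by rewrite ler_pXn2r ?nnegrE ?sqrtr_ge0 ?divr_ge0 //; lra.
Qed.

End MMD_empirical.

Lemma bounded_mfun_comp d1 d2 (T1 : measurableType d1) (T2 : measurableType d2)
    (R : realType) (phi : T1 -> T2) (g : T2 -> R) :
  measurable_fun setT phi -> bounded_mfun g -> bounded_mfun (fun w => g (phi w)).
Proof. by move=> mphi [mg [M gM]]; split; [exact: measurableT_comp mg mphi | exists M]. Qed.

#[export] Hint Resolve bounded_mfun_comp : bounded_mfun.

Section law.
Context d1 d2 (T1 : measurableType d1) (T2 : measurableType d2) (R : realType).
Variable P : probability T1 R.

(* [law mf] is [pushforward P f] (up to conversion) as a probability measure. *)
Definition law (f : T1 -> T2) (mf : measurable_fun setT f) : probability T2 R :=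
  distribution P (mfun_Sub (mem_set mf)).

Lemma RInt_law f (mf : measurable_fun setT f) (g : T2 -> R) : bounded_mfun g ->
  RInt P (fun w => g (f w)) = RInt (law mf) g.
Proof.
move=> bg; rewrite /RInt /law /distribution integral_pushforward //=.
- by apply/measurable_EFinP; exact: bounded_mfun_measurable.
- by rewrite preimage_setT; apply: bounded_mfun_integrable; exact: bounded_mfun_comp.
Qed.

End law.

Lemma eq_RInt_measure d (T : measurableType d) (R : realType) (mu nu : probability T R)
    (f : T -> R) :
  (forall A, measurable A -> mu A = nu A) -> RInt mu f = RInt nu f.
Proof. by move=> munu; congr fine; apply: eq_measure_integral => A mA _; exact: munu. Qed.

Lemma probability_prod_eq d1 d2 (T1 : measurableType d1) (T2 : measurableType d2)
    (R : realType) (Q1 Q2 : probability (T1 * T2)%type R) :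
  (forall A B, measurable A -> measurable B -> Q1 (A `*` B) = Q2 (A `*` B)) ->
  forall C, measurable C -> Q1 C = Q2 C.
Proof.
move=> Q12 C mC.
pose G := [set A `*` B | A in @measurable _ T1 & B in @measurable _ T2].
apply: (measure_unique G (fun=> setT)) => //.
- exact: measurable_prod_measurableType.
- move=> _ _ [A1 mA1 [B1 mB1 <-]] [A2 mA2 [B2 mB2 <-]]; rewrite -setXI.
  by exists (A1 `&` A2); [exact: measurableI | exists (B1 `&` B2) => //; exact: measurableI].
- by move=> _; exists setT => //; exists setT => //; rewrite setXTT.
- by rewrite bigcup_const.
- by move=> _ [A mA [B mB <-]]; exact: Q12.
- by move=> _; apply: le_lt_trans (probability_le1 Q1 measurableT) _; rewrite ltey.
Qed.

Section stationarity.
Context (R : realType) (q : nat) (dO : measure_display) (Omega : measurableType dO).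
Variables (P : probability Omega R) (y : int -> Omega -> Rq R q).
Hypotheses (my : forall t, measurable_fun setT (y t)) (st : strictly_stationary P y).

Lemma RInt_stationary_marginal t (g : Rq R q -> R) : bounded_mfun g ->
  RInt P (fun w => g (y t w)) = RInt (law P (my 0)) g.
Proof.
move=> bg; rewrite (RInt_law P (my t)) //; apply: eq_RInt_measure => A mA.
have preimE u : [set w | forall i : 'I_1, A (y u w)] = y u @^-1` A.
  by apply/seteqP; split => w /=; [move/(_ ord0) | move=> ? ?].
have := @st 1 (fun=> 0) t (fun=> A) (fun=> mA); rewrite /= add0r !preimE.
exact: esym.
Qed.

Lemma RInt_stationary_pair s t h (g : Rq R q * Rq R q -> R) : bounded_mfun g ->
  RInt P (fun w => g (y s w, y t w)) = RInt P (fun w => g (y (s + h) w, y (t + h) w)).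
Proof.
move=> bg.
rewrite (RInt_law P (measurable_fun_pair (my s) (my t))) //.
rewrite (RInt_law P (measurable_fun_pair (my (s + h)) (my (t + h)))) //.
apply: eq_RInt_measure; apply: probability_prod_eq => A B mA mB.
pose AB (i : 'I_2) := if val i == 0%N then A else B.
have mAB i : measurable (AB i) by rewrite /AB; case: ifP.
have preimE (ts : 'I_2 -> int) : [set w | forall i, AB i (y (ts i) w)] =
    (fun w => (y (ts ord0) w, y (ts ord_max) w)) @^-1` (A `*` B).
  apply/seteqP; split => w /=; first by move=> H; split; [exact: (H ord0)|exact: (H ord_max)].
  move=> [Ay By] i; rewrite /AB; case: ifP => [/eqP i0|i_neq0].
  - by have -> : i = ord0 by exact: val_inj.
  - by have -> : i = ord_max by apply: val_inj; case: i i_neq0 => [[|[|]]].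
have := @st 2 (fun i => if val i == 0%N then s else t) h AB mAB.
by rewrite !preimE.
Qed.

End stationarity.

Lemma sum_rev_ord (R : nmodType) (f : nat -> R) s :
  \sum_(t < s) f (s - t)%N = \sum_(h < s) f h.+1.
Proof.
elim: s => [|s ih]; first by rewrite !big_ord0.
rewrite big_ord_recl big_ord_recr /= subn0 -ih addrC.
by congr (_ + _); apply: eq_bigr => i _; rewrite /bump /= add1n subSS.
Qed.

Lemma double_sum_le (R : realFieldType) (a : nat -> nat -> R) (f : nat -> R) (c : R) :
  (forall s t, a s t = a t s) -> (forall s, a s s <= c) ->
  (forall s t, (t < s)%N -> a s t <= f (s - t)%N) -> (forall h, 0 <= f h) ->
  forall T, \sum_(s < T) \sum_(t < T) a s t <= c * T%:R + 2 * T%:R * \sum_(h < T) f h.+1.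
Proof.
move=> aC a_diag a_off f_ge0; elim=> [|T ih]; first by rewrite !big_ord0 !(mulr0, mul0r) addr0.
rewrite big_ord_recr /=; under eq_bigr do rewrite big_ord_recr /=.
rewrite big_split /= big_ord_recr /= big_ord_recr /=.
have col : \sum_(s < T) a s T <= \sum_(h < T) f h.+1.
  by rewrite -sum_rev_ord; apply: ler_sum => s _; rewrite aC; exact: a_off.
have row : \sum_(s < T) a T s <= \sum_(h < T) f h.+1.
  by rewrite -sum_rev_ord; apply: ler_sum => s _; exact: a_off.
have S_ge0 : 0 <= \sum_(h < T) f h.+1 by exact: sumr_ge0.
have := a_diag T; have := f_ge0 T.+1; have : 0 <= T%:R :> R by [].
by rewrite -natr1; nra.
Qed.

Section empirical_sqMMD_expectation.
Context (R : realType) (q : nat) (k : Rq R q -> Rq R q -> R).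
Hypothesis kP : bounded_psd_kernel k.
Context (dO : measure_display) (Omega : measurableType dO).
Variables (P : probability Omega R) (y : int -> Omega -> Rq R q).
Hypotheses (my : forall t, measurable_fun setT (y t)) (st : strictly_stationary P y).
Local Notation P0 := (law P (my 0)).

(* kcov s t = E <k(y_s, .) - m, k(y_t, .) - m>_H, with m the mean embedding of the
   marginal law, so that rho t = |kcov t 0| (lemma rhoE). *)
Definition kcov s t := RInt P (fun w => k (y s w) (y t w)) - mean_dot k P0 P0.

Lemma bounded_mfun_kernel_pair s t : bounded_mfun (fun w => k (y s w) (y t w)).
Proof.
exact: bounded_mfun_comp (measurable_fun_pair (my s) (my t))
  (bounded_mfun_kernel_uncurry kP).
Qed.

Lemma RInt_mean_embedding_stationary t :
  RInt P (fun w => mean_embedding k P0 (y t w)) = mean_dot k P0 P0.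
Proof. by rewrite (RInt_stationary_marginal my st) //; exact: bounded_mfun_mean_embedding. Qed.

Lemma rhoE t : rho P y k t = `|kcov t 0|.
Proof.
rewrite /rho /= -[pushforward P (y 0)]/(law P (my 0) : set _ -> _) /kcov.
have bk := bounded_mfun_kernel_pair t 0.
have [bmt bm0] : bounded_mfun (fun w => mean_embedding k P0 (y t w)) /\
    bounded_mfun (fun w => mean_embedding k P0 (y 0 w)) by split; auto with bounded_mfun.
rewrite RIntD ?RIntB ?RInt_cst //;
  try by [repeat apply: bounded_mfunB | exact: bounded_mfun_cst].
rewrite !RInt_mean_embedding_stationary -[RInt P0 _]/(mean_dot k P0 P0).
by congr `|_|; ring.
Qed.

Lemma kcov_shift s t : (t < s)%N -> kcov s.+1 t.+1 = kcov (s - t)%N 0.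
Proof.
move=> ts; rewrite /kcov; congr (_ - _).
have := RInt_stationary_pair my st s.+1 t.+1 (- t.+1%:Z) (bounded_mfun_kernel_uncurry kP).
by rewrite /= subrr subzn // ltnS ltnW.
Qed.

Lemma kcovC s t : kcov s t = kcov t s.
Proof. by rewrite /kcov; congr (RInt P _ - _); apply/funext => w; case: kP => _ ->. Qed.

Lemma normr_kcov_le2 s t : `|kcov s t| <= 2.
Proof.
have le1 : `|RInt P (fun w => k (y s w) (y t w))| <= 1.
  by apply: normr_RInt_le (bounded_mfun_kernel_pair s t) _ => w; exact: normr_kernel_le1.
have M_le1 : `|mean_dot k P0 P0| <= 1.
  apply: normr_RInt_le => [|x]; first exact: bounded_mfun_mean_embedding.
  by apply: normr_RInt_le => [|x']; [exact: bounded_mfun_kernel | exact: normr_kernel_le1].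
by apply: le_trans (ler_normB _ _) _; lra.
Qed.

Lemma bounded_mfun_empirical_sqMMD T : bounded_mfun (empirical_sqMMD k y P0 T).
Proof.
have bk := bounded_mfun_kernel_pair.
rewrite -[empirical_sqMMD _ _ _ _]/(fun w => empirical_sqMMD k y P0 T w).
under eq_fun do rewrite empirical_sqMMDE //.
by auto 10 with bounded_mfun.
Qed.

Lemma RInt_empirical_sqMMD T : (0 < T)%N -> RInt P (empirical_sqMMD k y P0 T) =
  T%:R^-1 * \sum_(s < T) (T%:R^-1 * \sum_(t < T) kcov s.+1 t.+1).
Proof.
move=> T_gt0; have T_neq0 : T%:R != 0 :> R by rewrite pnatr_eq0 -lt0n.
have bk := bounded_mfun_kernel_pair.
have E1 : RInt P (fun w => T%:R^-1 * \sum_(s < T) (T%:R^-1 *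
      \sum_(t < T) k (y s.+1%:Z w) (y t.+1%:Z w))) =
    T%:R^-1 * \sum_(s < T) (T%:R^-1 * \sum_(t < T) kcov s.+1 t.+1) + mean_dot k P0 P0.
  rewrite RIntZl ?RInt_sum; try by auto 10 with bounded_mfun.
  rewrite (eq_bigr (fun s : 'I_T => T%:R^-1 * \sum_(t < T) kcov s.+1 t.+1 + mean_dot k P0 P0)).
    by rewrite big_split sumr_const card_ord /= -mulr_natr; field.
  move=> s _; rewrite RIntZl ?RInt_sum; try by auto with bounded_mfun.
  rewrite (eq_bigr (fun t : 'I_T => kcov s.+1 t.+1 + mean_dot k P0 P0)); last first.
    by move=> t _; rewrite /kcov subrK.
  by rewrite big_split sumr_const card_ord /= -mulr_natr; field.
have E2 : RInt P (fun w => 2 * (T%:R^-1 *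
      \sum_(t < T) mean_embedding k P0 (y t.+1%:Z w))) = 2 * mean_dot k P0 P0.
  rewrite !RIntZl ?RInt_sum; try by auto 10 with bounded_mfun.
  rewrite (eq_bigr (fun=> mean_dot k P0 P0)); last first.
    by move=> t _; exact: RInt_mean_embedding_stationary.
  by rewrite sumr_const card_ord -mulr_natr; field.
rewrite -[empirical_sqMMD _ _ _ _]/(fun w => empirical_sqMMD k y P0 T w).
under eq_fun do rewrite empirical_sqMMDE //.
rewrite RIntD ?RIntB ?RInt_cst; try by auto 10 with bounded_mfun.
by rewrite E1 E2; ring.
Qed.

Lemma RInt_empirical_sqMMD_le T : (0 < T)%N ->
  RInt P (empirical_sqMMD k y P0 T) <= 2 / T%:R + 2 * (Sigma P y k T / T%:R).
Proof.
move=> T_gt0; have Tinv_ge0 : 0 <= T%:R^-1 :> R by rewrite invr_ge0.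
have sum_le : \sum_(s < T) \sum_(t < T) `|kcov s.+1 t.+1| <=
    2 * T%:R + 2 * T%:R * Sigma P y k T.
  apply: (@double_sum_le _ (fun s t => `|kcov s.+1 t.+1|) (fun h => rho P y k h%:Z)).
  - by move=> s t; rewrite kcovC.
  - by move=> s; exact: normr_kcov_le2.
  - by move=> s t ts; rewrite kcov_shift // rhoE.
  - by move=> h; exact: normr_ge0.
rewrite RInt_empirical_sqMMD //.
apply: le_trans (_ : T%:R^-1 * (T%:R^-1 * \sum_(s < T) \sum_(t < T) `|kcov s.+1 t.+1|) <= _).
  rewrite [X in _ <= _ * X]mulr_sumr; apply: ler_wpM2l => //; apply: ler_sum => s _.
  by apply: ler_wpM2l => //; apply: ler_sum => t _; exact: ler_norm.
have -> : 2 / T%:R + 2 * (Sigma P y k T / T%:R) =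
    T%:R^-1 * (T%:R^-1 * (2 * T%:R + 2 * T%:R * Sigma P y k T)).
  by field; rewrite pnatr_eq0 -lt0n.
by rewrite ler_wpM2l // ler_wpM2l.
Qed.

Lemma RInt_empirical_sqMMD_cvg0 : Sigma P y k T / T%:R @[T --> \oo] --> 0 ->
  RInt P (empirical_sqMMD k y P0 T) @[T --> \oo] --> 0.
Proof.
move=> Sigma_o.
have ub_cvg0 : 2 / T%:R + 2 * (Sigma P y k T / T%:R) @[T --> \oo] --> (0 : R).
  rewrite -[0]addr0 -{2}(mulr0 2); apply: cvgD; first exact: cvg_div_nat0.
  exact: cvgMl_tmp.
apply: (squeeze_cvgr _ (cvg_cst 0) ub_cvg0); near=> T.
rewrite RInt_ge0 => [|w]; last exact: empirical_sqMMD_ge0.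
by rewrite RInt_empirical_sqMMD_le //; near: T; exact: nbhs_infty_gt.
Unshelve. all: end_near.
Qed.

End empirical_sqMMD_expectation.

Lemma ereal_inf_gap (R : realType) (T : Type) (f : T -> R) (S : set T) (m : R) :
  (m%:E < ereal_inf [set (f x)%:E | x in S])%E ->
  exists2 g : R, 0 < g & forall x, S x -> m + g <= f x.
Proof.
have lb x : S x -> (ereal_inf [set (f x)%:E | x in S] <= (f x)%:E)%E.
  by move=> Sx; apply: ereal_inf_lbound; exists x.
case: (ereal_inf _) lb => [r| |] lb m_lt.
- exists (r - m); first by rewrite subr_gt0 -lte_fin.
  by move=> x Sx; have := lb x Sx; rewrite lee_fin; lra.
- by exists 1 => // x Sx; have := lb x Sx; rewrite leye_eq.
- by move: m_lt; rewrite ltNge leNye.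
Qed.

Section markov.
Context d (T : measurableType d) (R : realType) (mu : probability T R).

Lemma measurable_superlevel (f : T -> R) c :
  measurable_fun setT f -> measurable [set x | c <= f x].
Proof.
move=> mf; rewrite -[X in measurable X]setTI.
have -> : [set x | c <= f x] = f @^-1` `[c, +oo[.
  by apply/seteqP; split => x /=; rewrite in_itv /= andbT.
exact: mf (measurable_itv _).
Qed.

Lemma markov_RInt (Z : T -> R) c : 0 < c -> bounded_mfun Z -> (forall x, 0 <= Z x) ->
  (mu [set x | (c <= Z x)%R] <= (RInt mu Z / c)%:E)%E.
Proof.
move=> c_gt0 bZ Z_ge0; set A := [set x | c <= Z x].
have mA : measurable A by apply: measurable_superlevel; exact: bounded_mfun_measurable.
have A_fin : mu A \is a fin_num.
  by rewrite ge0_fin_numE // (le_lt_trans (probability_le1 mu mA)) ?ltey.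
have b1A : bounded_mfun (\1_A : T -> R).
  split; first exact: measurable_indic.
  by exists 1 => x; rewrite indicE; case: (x \in A); rewrite ?normr1 ?normr0.
rewrite -(fineK A_fin) lee_fin ler_pdivlMr // mulrC.
have -> : c * fine (mu A) = RInt mu (fun x => c * \1_A x).
  by rewrite RIntZl // /RInt integral_indic // setIT.
apply: le_RInt => //; first exact: bounded_mfunZl.
move=> x; rewrite indicE; case: (boolP (x \in A)) => [/set_mem|_]; first by rewrite mulr1.
by rewrite mulr0.
Qed.

End markov.

Theorem proposition3 (R : realType) (q d : nat)
  (dO : measure_display) (Omega : measurableType dO) (P : probability Omega R)
  (y : int -> Omega -> Rq R q)
  (k : Rq R q -> Rq R q -> R)
  (Theta : set 'rV[R]_d) (Pth : 'rV[R]_d -> probability (Rq R q) R)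
  (theta_hat : nat -> Omega -> 'rV[R]_d) (theta_star : 'rV[R]_d) :
  (forall t, measurable_fun [set: Omega] (y t)) ->
  strictly_stationary P y ->
  kernel_measurable k -> kernel_symmetric k -> kernel_posdef k ->
  kernel_characteristic k ->
  (forall u, `| k u u | <= 1) ->
  (* theta_hat T is a minimizer of theta |-> D(P_theta, P_T) over Theta *)
  (forall (T : nat) w, (0 < T)%N ->
     Theta (theta_hat T w) /\
     forall th, Theta th ->
       MMD k (Pth (theta_hat T w)) (empirical y T w) <= MMD k (Pth th) (empirical y T w)) ->
  (* Sigma_T = o(T) *)
  (fun T : nat => Sigma P y k T / T%:R) @ \oo --> (0 : R) ->
  (* (i) theta_star is the unique minimizer of theta |-> D(P_theta, P0) *)
  Theta theta_star ->
  (forall th, Theta th ->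
     MMD k (Pth theta_star) (pushforward P (y 0)) <= MMD k (Pth th) (pushforward P (y 0))) ->
  (forall th, Theta th ->
     (forall th', Theta th' ->
        MMD k (Pth th) (pushforward P (y 0)) <= MMD k (Pth th') (pushforward P (y 0))) ->
     th = theta_star) ->
  (* (ii) well-separated minimum *)
  (forall r : R, 0 < r ->
     ((MMD k (Pth theta_star) (pushforward P (y 0)))%:E <
     ereal_inf [set (MMD k (Pth th) (pushforward P (y 0)))%:E
               | th in [set th | Theta th /\ (r <= `| th - theta_star |)%R]])%E) ->
  (* conclusion: theta_hat_T -> theta_star in (outer) probability *)
  forall eps delta : R, 0 < eps -> 0 < delta ->
    \forall T \near \oo,
      exists A : set Omega, measurable A /\
        [set w | eps <= `| theta_hat T w - theta_star |] `<=` A /\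
        (P A <= delta%:E)%E.
Proof.
move=> my st kmeas ksym kpd _ kdiag hmin hSigma hTs _ _ hsep eps delta eps_gt0 delta_gt0.
have kP : bounded_psd_kernel k by split.
pose P0 := law P (my 0).
have [g g_gt0 gap] := ereal_inf_gap (hsep eps eps_gt0).
pose c := (g / 2) ^+ 2; have c_gt0 : 0 < c by rewrite exprn_gt0 // divr_gt0.
have EZ_small := cvgr0_norm_lt _ (RInt_empirical_sqMMD_cvg0 kP my st hSigma) _
  (mulr_gt0 c_gt0 delta_gt0).
near=> T; have T_gt0 : (0 < T)%N by near: T; exact: nbhs_infty_gt.
have bZ : bounded_mfun (empirical_sqMMD k y P0 T) by exact: bounded_mfun_empirical_sqMMD.
exists [set w | c <= empirical_sqMMD k y P0 T w]; split; [|split].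
- by apply: measurable_superlevel; exact: bounded_mfun_measurable.
- move=> w /= far; have [Th_hat hat_min] := hmin T w T_gt0.
  apply: (empirical_sqMMD_ge_gap kP (ltW g_gt0) (hat_min _ hTs)).
  exact: gap _ (conj Th_hat far).
- apply: le_trans (markov_RInt P c_gt0 bZ (empirical_sqMMD_ge0 kP y P0 T)) _.
  rewrite lee_fin ler_pdivrMr // mulrC; apply: le_trans (ler_norm _) (ltW _).
  by near: T; exact: EZ_small.
Unshelve. all: end_near.
Qed.
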